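(* Let $n\in\mathbb{N}$. Every edge of $\Gamma_0(n)\cdot I$ is an edge of both $\mathcal{F}$ and $\frac1n\mathcal{F}$. Moreover, the set of edges $\Gamma_0(n)\cdot I$ equals the set of edges common to $\mathcal{F}$ and $\frac1n\mathcal{F}$ if and only if $n$ is a prime power.
   Context: The Farey tessellation $\mathcal{F}$ is the ideal triangulation of the upper half-plane with vertex set $\mathbb{Q}\cup\{\infty\}$ ($\infty=\frac10$) whose edges are the geodesics joining reduced fractions $\frac pq,\frac rs$ with $|ps-qr|=1$. $\frac1n\mathcal{F}$ is the image of $\mathcal{F}$ under $z\mapsto z/n$. $I$ is the geodesic from $0$ to $\infty$, $\Gamma_0(n)=\{\begin{pmatrix}a&b\\c&d\end{pmatrix}\in PSL_2(\mathbb{Z}): c\equiv0\pmod n\}$ acting by Möbius transformations, and $\Gamma_0(n)\cdot I=\{\phi(I):\phi\in\Gamma_0(n)\}$. (Prime powers include $n=p^\ell$ with $\ell\ge0$.) *)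

From HB Require Import structures.
From mathcomp Require Import all_boot all_order all_algebra.
Set Implicit Arguments. Unset Strict Implicit. Unset Printing Implicit Defensive.
Import Order.TTheory GRing.Theory Num.Theory.
Local Open Scope ring_scope.

(* Points of Q ∪ {∞}: [Some q] is the rational q, [None] is ∞ = 1/0. *)
Definition qpt := option rat.

Definition pnum (x : qpt) : int := if x is Some r then numq r else 1.
Definition pden (x : qpt) : int := if x is Some r then denq r else 0.

(* Edges of the Farey tessellation F: geodesics joining reduced fractions
   p/q and r/s with |ps - qr| = 1.  An edge {x,y} is encoded by the
   (symmetric) relation on ordered endpoint pairs. *)
Definition farey_edge (x y : qpt) : Prop :=
  `|pnum x * pden y - pden x * pnum y| = 1.

Definition divpt (n : nat) (x : qpt) : qpt :=
  if x is Some r then Some (r / n%:R) else None.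

Definition scaled_farey_edge (n : nat) (x y : qpt) : Prop :=
  exists u v, farey_edge u v /\ x = divpt n u /\ y = divpt n v.

Definition mobius (a b c d : int) (x : qpt) : qpt :=
  match x with
  | Some z => let den := c%:~R * z + d%:~R in
              if den == 0 then None else Some ((a%:~R * z + b%:~R) / den)
  | None => if c == 0 then None else Some (a%:~R / c%:~R)
  end.

(* Edges of Γ_0(n)·I: φ(I) for φ = (a b; c d), ad - bc = 1, n | c.
   φ(I) is the geodesic with endpoints φ(0) and φ(∞) (unordered). *)
Definition gamma0_edge (n : nat) (x y : qpt) : Prop :=
  exists a b c d : int,
    a * d - b * c = 1 /\ (n%:Z %| c)%Z /\
    ((x = mobius a b c d (Some 0) /\ y = mobius a b c d None) \/
     (y = mobius a b c d (Some 0) /\ x = mobius a b c d None)).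

From HB Require Import structures.
From mathcomp Require Import all_boot all_order all_algebra.
From mathcomp Require Import ring zify.
Set Implicit Arguments. Unset Strict Implicit. Unset Printing Implicit Defensive.
Import Order.TTheory GRing.Theory Num.Theory.
Local Open Scope ring_scope.

(* Every point of Q ∪ {∞} is p/q for a coprime pair (p, q), unique up to sign,
   so all three kinds of edges can be described by integer coordinates.
   1. Γ_0(n)-edges are exactly the Farey edges having an endpoint whose
      reduced denominator is divisible by n (columns of a matrix of
      determinant 1 are coprime, and conversely a Farey edge p/q—r/s with
      n | s gives the matrix (±r p; ±s q) in Γ_0(n)).
   2. A Farey edge with an endpoint of denominator divisible by n is also an
      edge of (1/n)F; this gives the first claim.
   3. If x—y is a common edge of F and (1/n)F, comparing the two coordinate
      descriptions factors n = t·t' with t, t' coprime, t | den x, t' | den y.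
      For n = p^l one of t, t' is 1, so n divides a denominator and x—y is a
      Γ_0(n)-edge by 1.
   4. If n = a·b with coprime a, b > 1, choose U b - a V = 1: the edge U/a—V/b
      lies in F and (1/n)F, but neither denominator is divisible by n. *)

Definition frac (p q : int) : qpt := if q == 0 then None else Some (p%:~R / q%:~R).

Lemma unit_sq (e : int) : `|e| = 1 -> e * e = 1.
Proof. by move=> he; rewrite -expr2 -real_normK ?num_real // he expr1n. Qed.

Lemma coprimez_abs (p q : int) : coprimez p q -> coprime `|p|%N `|q|%N.
Proof. by rewrite /coprimez /gcdz /coprime => /eqP [->]. Qed.

Lemma frac_rep p q : coprimez p q ->
  exists e : int, [/\ `|e| = 1, pnum (frac p q) = e * p & pden (frac p q) = e * q].
Proof.
move=> /coprimez_abs cpq; rewrite /frac; have [q0|q0] := eqVneq q 0 => /=.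
  have np1 : `|p| = 1.
    by move: cpq; rewrite q0 /coprime gcdn0 => /eqP p1; rewrite -abszE p1.
  by exists p; rewrite q0 mulr0 unit_sq.
exists (Num.sg q).
by rewrite normr_sg coprimeq_num ?coprimeq_den // (negbTE q0) -normrEsg.
Qed.

Lemma pden_frac_abs p q : coprimez p q -> `|pden (frac p q)|%N = `|q|%N.
Proof.
by move=> /frac_rep [e [he _ ->]]; apply/eqP; rewrite -eqz_nat !abszE normrM he mul1r.
Qed.

Lemma pt_rep x : x = frac (pnum x) (pden x) /\ coprimez (pnum x) (pden x).
Proof.
case: x => [r|] //=; rewrite /frac denq_eq0 divq_num_den; split => //.
by rewrite /coprimez /gcdz; have /eqP -> := coprime_num_den r.
Qed.

Lemma frac_scale k p q : k != 0 -> frac (k * p) (k * q) = frac p q.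
Proof.
move=> k0; rewrite /frac mulf_eq0 (negbTE k0) /=; case: eqP => // /eqP q0.
by congr Some; rewrite !intrM; field; rewrite !intr_eq0 k0 q0.
Qed.

Lemma frac_cross p q p' q' : frac p q = frac p' q' -> p * q' = p' * q.
Proof.
rewrite /frac; case: eqP => [->|/eqP q0]; case: eqP => [->|/eqP q0'] //=.
  by rewrite !mulr0.
by move=> [] /eqP; rewrite eqr_div ?intr_eq0 // -!intrM eqr_int => /eqP.
Qed.

Lemma divpt_frac n p q : (0 < n)%N -> divpt n (frac p q) = frac p (q * n%:Z).
Proof.
move=> n0; have n_neq0 : n%:Z != 0 by rewrite eqz_nat -lt0n.
rewrite /frac mulf_eq0 (negbTE n_neq0) orbF.
case: eqP => // /eqP q0 /=; congr Some; rewrite intrM; field.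
by rewrite intr_eq0 q0 pnatr_eq0 -lt0n n0.
Qed.

Lemma mobius0 a b c d : mobius a b c d (Some 0) = frac b d.
Proof. by rewrite /mobius /frac mulr0 add0r mulr0 add0r intr_eq0. Qed.

Lemma mobiusI a b c d : mobius a b c d None = frac a c.
Proof. by []. Qed.

Lemma frac_farey p q r s : coprimez p q -> coprimez r s ->
  farey_edge (frac p q) (frac r s) <-> `|p * s - q * r| = 1.
Proof.
rewrite /farey_edge => /frac_rep [e [he -> ->]] /frac_rep [f [hf -> ->]].
have -> : e * p * (f * s) - e * q * (f * r) = (e * f) * (p * s - q * r) by ring.
by rewrite normrM normrM he hf mul1r.
Qed.

Lemma farey_sym x y : farey_edge x y -> farey_edge y x.
Proof. by rewrite /farey_edge => <-; rewrite -normrN; congr `|_|; ring. Qed.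

Lemma scaled_sym n x y : scaled_farey_edge n x y -> scaled_farey_edge n y x.
Proof. by move=> [u [v [F [-> ->]]]]; exists v, u; split => //; apply: farey_sym. Qed.

Lemma gamma0_sym n x y : gamma0_edge n x y -> gamma0_edge n y x.
Proof. by move=> [a [b [c [d [det [nc E]]]]]]; exists a, b, c, d; tauto. Qed.

Lemma det_coprime a b c d : a * d - b * c = 1 -> coprimez b d /\ coprimez a c.
Proof.
move=> det; split; apply/coprimezP.
  by exists (-c, a); rewrite /= -det; ring.
by exists (d, -b); rewrite /= -det; ring.
Qed.

Lemma gamma0_endpoints n a b c d : a * d - b * c = 1 -> (n%:Z %| c)%Z ->
  farey_edge (mobius a b c d (Some 0)) (mobius a b c d None) /\
  (n%:Z %| pden (mobius a b c d None))%Z.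
Proof.
move=> det nc; have [cbd cac] := det_coprime det; rewrite mobius0 mobiusI.
split; last by have [e [_ _ ->]] := frac_rep cac; apply: dvdz_mull.
apply/frac_farey => //.
have -> : b * c - d * a = - (a * d - b * c) by ring.
by rewrite det normrN normr1.
Qed.

(* Conversely, a Farey edge x—y with n | den y is φ(I) for
   φ = (-e·num y, num x; -e·den y, den x) ∈ Γ_0(n), e the Farey determinant. *)
Lemma gamma0_of_farey n x y :
  farey_edge x y -> (n%:Z %| pden y)%Z -> gamma0_edge n x y.
Proof.
rewrite /farey_edge => he ny; set e := _ - _ in he.
have e0 : - e != 0 by rewrite oppr_eq0 -normr_eq0 he.
have [ex _] := pt_rep x; have [ey _] := pt_rep y.
exists (- e * pnum y), (pnum x), (- e * pden y), (pden x); split; last split.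
- by rewrite -(unit_sq he) /e; ring.
- exact: dvdz_mull.
- by left; rewrite mobius0 mobiusI frac_scale // -ex -ey.
Qed.

Lemma gamma0_edgeP n x y : gamma0_edge n x y <->
  farey_edge x y /\ ((n%:Z %| pden x)%Z \/ (n%:Z %| pden y)%Z).
Proof.
split.
- move=> [a [b [c [d [det [nc [[-> ->]|[-> ->]]]]]]]];
    have [F D] := gamma0_endpoints det nc.
  + by split; [|right].
  + by split; [apply: farey_sym|left].
- move=> [F [nx|ny]]; last exact: gamma0_of_farey.
  by apply: gamma0_sym; apply: gamma0_of_farey (farey_sym F) nx.
Qed.

(* A Farey edge p/q—r/s with s = k n is the image under z ↦ z/n of the
   Farey edge (np)/q—r/k. *)
Lemma scaled_of_farey n x y : (0 < n)%N ->
  farey_edge x y -> (n%:Z %| pden y)%Z -> scaled_farey_edge n x y.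
Proof.
move=> n0 F /dvdzP [k hk]; have [ex _] := pt_rep x; have [ey _] := pt_rep y.
move: hk F ex ey; rewrite /farey_edge.
move: (pnum x) (pden x) (pnum y) (pden y) => p q r s -> he -> ->.
set e := _ - _ in he; have ee := unit_sq he.
exists (frac (n%:Z * p) q), (frac r k); split; last split.
- apply/frac_farey.
  + by apply/coprimezP; exists (k * e, - r * e); rewrite /= -ee /e; ring.
  + by apply/coprimezP; exists (- q * e, n%:Z * p * e); rewrite /= -ee /e; ring.
  + by rewrite -he /e; congr `|_|; ring.
- by rewrite divpt_frac // [q * _]mulrC frac_scale // eqz_nat -lt0n.
- by rewrite divpt_frac.
Qed.

Lemma gamma0_edge_common n x y : (0 < n)%N ->
  gamma0_edge n x y -> farey_edge x y /\ scaled_farey_edge n x y.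
Proof.
move=> n0 /gamma0_edgeP [F [nx|ny]]; split => //; last exact: scaled_of_farey.
by apply: scaled_sym; apply: scaled_of_farey (farey_sym F) nx.
Qed.

Lemma scaled_den n p q P Q : (0 < n)%N -> coprimez p q -> coprimez P Q ->
  frac p q = divpt n (frac P Q) -> q != 0 ->
  exists2 t, q = t * Q & n%:Z * p = P * t.
Proof.
move=> n0 cpq cPQ; rewrite divpt_frac // => /frac_cross E q0.
have Q0 : Q != 0.
  apply: contraTneq cPQ => Q0; move: E; rewrite Q0 mul0r mulr0 => /esym/eqP.
  by rewrite mulf_eq0 (negbTE q0) orbF => /eqP ->.
have : (Q %| P * q)%Z by rewrite -E mulrA dvdz_mulr // dvdz_mull.
rewrite Gauss_dvdzr; last by rewrite /coprimez gcdzC.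
move=> /dvdzP [t ht]; exists t => //; apply: (mulIf Q0).
have -> : n%:Z * p * Q = p * (Q * n%:Z) by ring.
by rewrite E ht; ring.
Qed.

Lemma scaled_edge_factor n x y : (0 < n)%N ->
  farey_edge x y -> scaled_farey_edge n x y ->
  exists t t' : nat,
    [/\ n = (t * t')%N, coprime t t', (t%:Z %| pden x)%Z & (t'%:Z %| pden y)%Z].
Proof.
move=> n0 F [u [v [Fuv [hx hy]]]].
have [x0|x0] := eqVneq (pden x) 0.
  by exists n, 1%N; rewrite muln1 coprimen1 x0 dvdz0 dvd1z.
have [y0|y0] := eqVneq (pden y) 0.
  by exists 1%N, n; rewrite mul1n coprime1n y0 dvdz0 dvd1z.
have [ex cx] := pt_rep x; have [ey cy] := pt_rep y.
have [eu cu] := pt_rep u; have [ev cv] := pt_rep v.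
rewrite ex eu in hx; rewrite ey ev in hy.
have [t tx nx] := scaled_den n0 cx cu hx x0.
have [t' ty ny] := scaled_den n0 cy cv hy y0.
move: F Fuv; rewrite /farey_edge => he heuv; set e := _ - _ in he.
have key : n%:Z * e = t * t' * (pnum u * pden v - pden u * pnum v).
  rewrite /e mulrBr mulrA nx mulrCA ny ty tx; ring.
exists `|t|%N, `|t'|%N; split.
- have := congr1 (fun z => `|z|) key; rewrite /= !normrM he heuv !mulr1 => nt.
  by apply/eqP; rewrite -eqz_nat PoszM !abszE -nt.
- have e_eq : e = pnum x * (t' * pden v) - t * pden u * pnum y by rewrite /e ty tx.
  apply/coprimez_abs/coprimezP; exists (- e * pnum y * pden u, e * pnum x * pden v).
  by rewrite /= -(unit_sq he) [X in _ = _ * X]e_eq; ring.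
- by rewrite tx dvdzE abszM /= dvdn_mulr.
- by rewrite ty dvdzE abszM /= dvdn_mulr.
Qed.

Lemma prime_power_coprime_factors p l a b : prime p ->
  (a * b)%N = (p ^ l)%N -> coprime a b -> a = 1%N \/ b = 1%N.
Proof.
move=> pp ab.
have [i _ ->] : exists2 i, (i <= l)%N & a = (p ^ i)%N.
  by apply/dvdn_pfactor => //; rewrite -ab dvdn_mulr.
have [j _ ->] : exists2 j, (j <= l)%N & b = (p ^ j)%N.
  by apply/dvdn_pfactor => //; rewrite -ab dvdn_mull.
case: i => [|i]; first by left.
case: j => [|j]; first by right.
by rewrite coprime_pexpl // coprime_pexpr // prime_coprime // dvdnn.
Qed.

(* A positive integer is a prime power or a product of two coprime factors > 1
   (its p-part and p'-part for p its smallest prime divisor). *)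
Lemma prime_power_or_coprime_split n : (0 < n)%N ->
  (exists p l : nat, prime p /\ n = (p ^ l)%N) \/
  exists a b : nat, [/\ (1 < a)%N, (1 < b)%N, coprime a b & n = (a * b)%N].
Proof.
move=> n0; have [n1|n_gt1] := leqP n 1.
  by left; exists 2%N, 0%N; split => //; lia.
set p := pdiv n; have [b1|b_gt1] := leqP (n`_p^')%N 1.
- left; exists p, (logn p n); split; first exact: pdiv_prime.
  have b_eq1 : (n`_p^')%N = 1%N by have := part_gt0 p^' n; lia.
  by rewrite -p_part -{1}(partnC p n0) b_eq1 muln1.
- right; exists (n`_p)%N, (n`_p^')%N; split => //.
  + by rewrite p_part_gt1 /p pi_pdiv.
  + exact: coprime_partC.
  + by rewrite partnC.
Qed.

Lemma prime_power_common_gamma0 n p l x y : (0 < n)%N -> prime p ->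
  n = (p ^ l)%N -> farey_edge x y -> scaled_farey_edge n x y ->
  gamma0_edge n x y.
Proof.
move=> n0 pp nl F S; apply/gamma0_edgeP; split => //.
have [t [t' [ntt ctt tx ty]]] := scaled_edge_factor n0 F S.
have [t1|t'1] := prime_power_coprime_factors pp (etrans (esym ntt) nl) ctt.
- by right; rewrite ntt t1 mul1n.
- by left; rewrite ntt t'1 muln1.
Qed.

(* For n = a b with a, b > 1 coprime, U/a—V/b (U b - a V = 1) is a common
   edge of F and (1/n)F outside Γ_0(n)·I. *)
Lemma coprime_split_edge n a b : (1 < a)%N -> (1 < b)%N -> coprime a b ->
  n = (a * b)%N ->
  exists x y : qpt,
    [/\ farey_edge x y, scaled_farey_edge n x y & ~ gamma0_edge n x y].
Proof.
move=> a1 b1 cab nab; have n0 : (0 < n)%N by rewrite nab muln_gt0; lia.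
have /coprimezP [[u v] /= uv] : coprimez a%:Z b%:Z by rewrite /coprimez /gcdz /= (eqP cab).
set U := v; set V := - u.
have hUV : U * b%:Z - a%:Z * V = 1 by rewrite /U /V -uv; ring.
have cUa : coprimez U a%:Z.
  by apply/coprimezP; exists (b%:Z, - V); rewrite /= -hUV; ring.
have cVb : coprimez V b%:Z.
  by apply/coprimezP; exists (- a%:Z, U); rewrite /= -hUV; ring.
have c1 z : coprimez z 1 by rewrite /coprimez /gcdz gcdn1.
exists (frac U a%:Z), (frac V b%:Z); split.
- by apply/frac_farey => //; rewrite hUV normr1.
- exists (frac (b%:Z * U) 1), (frac (a%:Z * V) 1); split; last split.
  + apply/frac_farey => //.
    have -> : b%:Z * U * 1 - 1 * (a%:Z * V) = U * b%:Z - a%:Z * V by ring.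
    by rewrite hUV normr1.
  + by rewrite divpt_frac // mul1r nab PoszM [a%:Z * _]mulrC frac_scale // eqz_nat; lia.
  + by rewrite divpt_frac // mul1r nab PoszM frac_scale // eqz_nat; lia.
- move=> /gamma0_edgeP [_]; rewrite !dvdzE pden_frac_abs ?pden_frac_abs //=.
  by case=> /dvdn_leq; rewrite nab; nia.
Qed.

Theorem corollary3p9 (n : nat) (hn : (0 < n)%N) :
  (forall x y : qpt, gamma0_edge n x y ->
     farey_edge x y /\ scaled_farey_edge n x y) /\
  ((forall x y : qpt,
      gamma0_edge n x y <-> (farey_edge x y /\ scaled_farey_edge n x y)) <->
   (exists p l : nat, prime p /\ n = (p ^ l)%N)).
Proof.
split; first by move=> x y; apply: gamma0_edge_common.
split.
- move=> common; have [//|[a [b [a1 b1 cab nab]]]] := prime_power_or_coprime_split hn.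
  have [x [y [F S notG]]] := coprime_split_edge a1 b1 cab nab.
  by case: notG; apply/common.
- move=> [p [l [pp nl]]] x y; split; first exact: gamma0_edge_common.
  by move=> [F S]; apply: prime_power_common_gamma0 pp nl F S.
Qed.
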